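(* For every morphism $f:m\to n$ of $\mathsf{Syn}(\delta)$, the corelation $\Pi(f)$ lies in $\mathbf{FinCorel}^\circ$; that is, every equivalence class of $\Pi(f)$ contains exactly one element of $\underline{m}$ and at least one element of $\underline{n}$.
   Context: Write $\underline{m}=\{1,\dots,m\}$. $\mathsf{Syn}(\delta)$ is the free PROP (strict symmetric monoidal category with objects $\mathbb{N}$) on one generator $\delta:1\to2$, modelled graphically: a morphism $f:m\to n$ is an isomorphism class of finite directed acyclic graphs $G(f)$ with $m$ linearly ordered input half-edges, $n$ linearly ordered output half-edges, and finitely many internal vertices, each with exactly one incoming half-edge and an ordered pair of outgoing half-edges; composition glues outputs to inputs, tensor is disjoint union, symmetries are wire crossings (not vertices). $\Pi(f)$ (the ancestry partition) is the equivalence relation on $\underline{m}\sqcup\underline{n}$ in which $x\sim y$ iff the pendant vertices labelled $x,y$ lie in the same connected component of the underlying undirected graph of $G(f)$, where inputs are attached as pendant vertices labelled by $\underline{m}$ and outputs as pendant vertices labelled by $\underline{n}$. $\mathbf{FinCorel}^\circ$ is the set of equivalence relations $R$ on $\underline{m}\sqcup\underline{n}$ (corelations $m\to n$) such that (a) each class contains exactly one element of $\underline{m}$ and (b) each class contains at least one element of $\underline{n}$. *)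

From mathcomp Require Import all_boot.
Set Implicit Arguments. Unset Strict Implicit. Unset Printing Implicit Defensive.

(* A representative graph G(f) of a morphism f : m -> n of Syn(delta).
   - k internal vertices, each with one incoming half-edge and an ordered
     pair of outgoing half-edges (indexed by bool: false = first, true = second);
   - "sources" of wires: the m input half-edges, and the 2k outgoing
     half-edges of internal vertices;
   - "targets" of wires: the k incoming half-edges of internal vertices, and
     the n output half-edges;
   - [wire] assigns to every target half-edge the source half-edge it is
     glued to; it is a bijection (every half-edge is used exactly once);
   - acyclicity is witnessed by a rank function strictly increasing along
     every internal edge between vertices.
   Symmetries are wire crossings (encoded in the bijection), not vertices. *)
Record SynGraph (m n : nat) := {
  nverts : nat;
  wire : 'I_nverts + 'I_n -> 'I_m + ('I_nverts * bool);
  wire_bij : bijective wire;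
  rank : 'I_nverts -> nat;
  wire_acyclic : forall v : 'I_nverts,
      match wire (inl v) with
      | inr (u, _) => rank u < rank v
      | inl _ => true
      end
}.

Definition node m n (G : SynGraph m n) : finType :=
  ('I_m + 'I_n + 'I_(nverts G))%type.

Definition node_of_source m n (G : SynGraph m n)
  (s : 'I_m + ('I_(nverts G) * bool)) : node G :=
  match s with
  | inl i => inl (inl i)
  | inr (u, _) => inr u
  end.

Definition node_of_target m n (G : SynGraph m n)
  (t : 'I_(nverts G) + 'I_n) : node G :=
  match t with
  | inl v => inr v
  | inr j => inl (inr j)
  end.

Definition adj m n (G : SynGraph m n) : rel (node G) :=
  fun x y => [exists t,
    ((@node_of_source m n G (@wire m n G t) == x) && (@node_of_target m n G t == y)) ||
    ((@node_of_source m n G (@wire m n G t) == y) && (@node_of_target m n G t == x))].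

Definition pendant m n (G : SynGraph m n) (x : 'I_m + 'I_n) : node G := inl x.

Definition Pi m n (G : SynGraph m n) : rel ('I_m + 'I_n) :=
  fun x y => connect (@adj m n G) (@pendant m n G x) (@pendant m n G y).

Definition FinCorel_circ m n (R : rel ('I_m + 'I_n)) : Prop :=
  equivalence_rel R /\
  (forall x : 'I_m + 'I_n,
     (exists! i : 'I_m, R x (inl i)) /\ (exists j : 'I_n, R x (inr j))).

(** Every node of G(f) other than an input has a unique parent, the source of
    the wire entering it, and every undirected edge joins a node to its parent.
    Following parents therefore reaches a single input, the ancestor of the
    node, and the ancestor is constant along edges: each connected component
    contains exactly one input. Following outgoing wires instead ends at an
    output. Both walks terminate because the rank strictly increases along
    wires. *)

From mathcomp Require Import all_boot.
Set Implicit Arguments. Unset Strict Implicit. Unset Printing Implicit Defensive.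

Section FixpointOrbit.
Variables (T : finType) (f : T -> T).

Lemma fconnect_fixed x y : f x = x -> fconnect f x y -> y = x.
Proof. by move=> fx /iter_findex <-; apply: iter_fix. Qed.

Lemma fconnect_f_fixed x z : f z = z -> fconnect f (f x) z = fconnect f x z.
Proof.
move=> fz; apply/idP/idP; first exact: connect_trans (fconnect1 f x).
move/iter_findex; case: (findex f x z) => [|k] def_z; rewrite -def_z in fz *.
  by rewrite fz connect0.
by rewrite iterSr fconnect_iter.
Qed.

End FixpointOrbit.

Lemma connect_descent (T : finType) (e : rel T) (final : pred T) (mu : T -> nat) :
    (forall x, ~~ final x -> exists2 y, e x y & mu y < mu x) ->
  forall x, exists2 y, connect e x y & final y.
Proof.
move=> step x; have [k] : exists k, mu x < k by exists (mu x).+1.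
elim: k x => // k IH x lt_xk.
have [final_x | /step[y exy lt_yx]] := boolP (final x); first by exists x.
have [z yz final_z] := IH y (leq_trans lt_yx lt_xk).
by exists z => //; apply: connect_trans (connect1 exy) yz.
Qed.

Section SynGraphAncestry.
Variables (m n : nat) (G : SynGraph m n).
Local Notation node := (node G).
Local Notation src := (@node_of_source m n G).
Local Notation tgt := (@node_of_target m n G).
Local Notation adj := (@adj m n G).
Local Notation input i := (inl (inl i) : node).
Local Notation output j := (inl (inr j) : node).

Definition is_input (x : node) : bool := if x is inl (inl _) then true else false.
Definition is_output (x : node) : bool := if x is inl (inr _) then true else false.

Definition parent (x : node) : node :=
  match x with
  | inl (inl _) => x
  | inl (inr j) => src (wire (inr j))
  | inr v => src (wire (inl v))
  end.

Definition max_rank : nat := \max_(v : 'I_(nverts G)) rank v.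

Definition height (x : node) : nat :=
  match x with
  | inl (inl _) => 0
  | inr v => (rank v).+1
  | inl (inr _) => max_rank.+2
  end.

Lemma parent_tgt t : parent (tgt t) = src (wire t).
Proof. by case: t. Qed.

Lemma tgt_onto x : ~~ is_input x -> exists t, x = tgt t.
Proof. by case: x => [[i|j]|v] // _; [exists (inr j) | exists (inl v)]. Qed.

Lemma src_wire_onto x : ~~ is_output x -> exists t, src (wire t) = x.
Proof.
have [w wireK w_wire] := wire_bij G.
case: x => [[i|j]|v] // _; [exists (w (inl i)) | exists (w (inr (v, false)))];
  by rewrite w_wire.
Qed.

Lemma height_wire t : height (src (wire t)) < height (tgt t).
Proof.
have rank_max (v : 'I_(nverts G)) : rank v <= max_rank by apply: leq_bigmax.
case: t => [v|j] /=; last by case: (wire (inr j)) => [i|[u b]] //=; rewrite !ltnS.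
by have := wire_acyclic v; case: (wire (inl v)) => [i|[u b]].
Qed.

Lemma height_max x : height x <= max_rank.+2.
Proof.
case: x => [[i|j]|v] //=; rewrite !ltnS ?leqW //.
exact: leq_bigmax.
Qed.

Lemma adj_wire t : adj (src (wire t)) (tgt t).
Proof. by apply/existsP; exists t; rewrite !eqxx. Qed.

Lemma adj_sym : symmetric adj.
Proof. by move=> x y; apply/existsP/existsP => -[t ?]; exists t; rewrite orbC. Qed.

Lemma adj_parent x y : adj x y -> parent y = x \/ parent x = y.
Proof.
by case/existsP=> t /orP[] /andP[/eqP <- /eqP <-]; rewrite parent_tgt; [left|right].
Qed.

Lemma fconnect_parent_sub : subrel (fconnect parent) (connect adj).
Proof.
apply: connect_sub => x _ /eqP <-.
have [/tgt_onto[t ->] | ] := boolP (~~ is_input x).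
  by rewrite parent_tgt connect1 // adj_sym adj_wire.
by case: x => [[i|j]|v] //= _; apply: connect0.
Qed.

Lemma exists_input_ancestor x : exists i, fconnect parent x (input i).
Proof.
have [|y xy] := @connect_descent _ (frel parent) is_input height _ x.
  move=> {}x /tgt_onto[t ->].
  by exists (parent (tgt t)); rewrite /= ?eqxx // parent_tgt height_wire.
by case: y xy => [[i|j]|v] // xy _; exists i.
Qed.

Lemma input_ancestor_closed i :
  closed adj [pred x | fconnect parent x (input i)].
Proof.
by move=> x y /adj_parent[] <-; rewrite !inE fconnect_f_fixed.
Qed.

Lemma input_ancestor_unique x i i' :
  fconnect parent x (input i) -> connect adj x (input i') -> i = i'.
Proof.
move=> x_i /(closed_connect (input_ancestor_closed i)); rewrite !inE x_i.
by move/esym/(@fconnect_fixed _ parent _ _ erefl) => [->].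
Qed.

Lemma exists_output_descendant x : exists j, connect adj x (output j).
Proof.
have [|y xy] := @connect_descent _ adj is_output (fun y => max_rank.+2 - height y) _ x.
  move=> {}x /src_wire_onto[t <-]; exists (tgt t); first exact: adj_wire.
  exact: ltn_sub2l (leq_trans (height_wire t) (height_max _)) (height_wire t).
by case: y xy => [[i|j]|v] // xy _; exists j.
Qed.

Lemma Pi_equivalence : equivalence_rel (Pi G).
Proof.
move=> x y z; split; first exact: connect0.
by rewrite /Pi => /(same_connect (sym_connect_sym adj_sym)) ->.
Qed.

End SynGraphAncestry.

Theorem proposition2p11 (m n : nat) (G : SynGraph m n) : FinCorel_circ (Pi G).
Proof.
split=> [|x]; first exact: Pi_equivalence.
have [i x_i] := exists_input_ancestor (pendant G x).
have Pi_xi : Pi G x (inl i) := fconnect_parent_sub x_i.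
split.
- by exists i; split=> // i'; apply: input_ancestor_unique x_i.
- have [j ij] := @exists_output_descendant _ _ G (inl (inl i)).
  by exists j; apply: connect_trans ij.
Qed.
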